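(* Let $P_Z$ be a latent distribution and $\tau:\Theta\times\mathcal{Z}\to\mathbb{R}^p$ a simulator, and let $P_\theta$ denote the law of $\tau(\theta,Z)$, $Z\sim P_Z$. Suppose the observed data are $X_i^*=\tau(\theta^*,Z_i^* )$, $i=1,\dots,n$, with $Z_1^*,\dots,Z_n^*$ i.i.d. $P_Z$, and let $\mathbf{Z}_m=(Z_1,\dots,Z_m)$ be i.i.d. $P_Z$, independent of the $Z_i^*$. Assume: (i) there exists $C>0$ with $\|\theta_1-\theta_2\|\le C\,d_{SW}(P_{\theta_1},P_{\theta_2})$ for all $\theta_1,\theta_2\in\Theta$; (ii) for $\mathbf{Z}_k$ i.i.d. $P_Z$ of any size $k$, $\sup_{\theta\in\Theta}d_{SW}(\mathbb{Q}^\theta_k,P_\theta)=O_p(k^{-1/2})$, where $\mathbb{Q}^\theta_k=\frac1k\sum_{j=1}^k\delta_{\tau(\theta,Z_j)}$. Then any $\hat\theta_{m,n}\in\arg\min_{\theta\in\Theta}d_{SW}\big(\mathbb{Q}^\theta_m,\mathbb{P}_n\big)$, where $\mathbb{P}_n=\frac1n\sum_{i=1}^n\delta_{X_i^*}$ and $\mathbb{Q}^\theta_m$ uses $\mathbf{Z}_m$, satisfies $$\|\hat\theta_{m,n}-\theta^*\|=O_p(n^{-1/2}+m^{-1/2}).$$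
   Context: For probability measures $\mu,\nu$ on $\mathbb{R}^p$ with finite first moment, the sliced Wasserstein distance is $d_{SW}(\mu,\nu)=\int_{S^{p-1}}W_1(\mu_\omega,\nu_\omega)\,d\sigma(\omega)$, where $\sigma$ is the uniform probability measure on the unit sphere $S^{p-1}$, $\mu_\omega,\nu_\omega$ are the pushforwards of $\mu,\nu$ under $x\mapsto\omega^Tx$, and $W_1$ is the 1-Wasserstein distance on $\mathbb{R}$. $\delta_x$ is the Dirac mass at $x$. The minimizer is assumed to exist. *)

From HB Require Import structures.
From mathcomp Require Import all_boot all_order all_algebra.
From mathcomp Require Import all_classical all_reals all_analysis.

Set Implicit Arguments.
Unset Strict Implicit.
Unset Printing Implicit Defensive.

Import Order.TTheory GRing.Theory Num.Theory.
Import numFieldNormedType.Exports.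

Local Open Scope classical_set_scope.
Local Open Scope ring_scope.

Section SlicedWasserstein.
Variable R : realType.

Definition dotp (p : nat) (u v : 'rV[R]_p) : R := \sum_(i < p) u 0 i * v 0 i.
Definition enorm (p : nat) (v : 'rV[R]_p) : R := Num.sqrt (dotp v v).

Definition sphere (p : nat) : set 'rV[R]_p := [set w | enorm w = 1].

Definition BorelRp (p : nat) := g_sigma_algebraType (@open 'rV[R]_p).
Arguments sphere p : clear implicits.

(* sigma is the uniform probability measure on S^{p-1}: a Borel probability
   measure on R^p concentrated on the sphere and invariant under all
   orthogonal maps (this characterizes it uniquely). *)
Definition uniform_on_sphere (p : nat) (sigma : probability (BorelRp p) R) :=
  sigma (~` (sphere p : set (BorelRp p))) = 0%E /\
  forall U : 'M[R]_p, U *m U^T = 1%:M ->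
    forall A : set (BorelRp p), measurable A ->
      sigma ((fun w : BorelRp p => (w : 'rV[R]_p) *m U : BorelRp p) @^-1` A) = sigma A.

(* Probability measures on R^p are given as set functions; for such a
   mu, the CDF of the projection mu_w at t is mu {x | w^T x <= t}. *)
(* 1-Wasserstein distance on R between the projections mu_w and nu_w,
   W_1(mu_w, nu_w) = \int_R |F_{mu_w}(t) - F_{nu_w}(t)| dt. *)
Definition W1_proj (p : nat) (mu nu : set 'rV[R]_p -> \bar R) (w : 'rV[R]_p)
  : \bar R :=
  (\int[@lebesgue_measure R]_(t in [set: R])
     `| mu [set x | (dotp w x <= t)%R] - nu [set x | (dotp w x <= t)%R] |)%E.

Definition dSW (p : nat) (sigma : probability (BorelRp p) R)
  (mu nu : set 'rV[R]_p -> \bar R) : \bar R :=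
  (\int[sigma]_(w in (sphere p : set (BorelRp p))) W1_proj mu nu w)%E.

Definition empirical (p : nat) (xs : nat -> 'rV[R]_p) (k : nat)
  : set 'rV[R]_p -> \bar R :=
  fun A => ((k%:R)^-1 * \sum_(j < k) \1_A (xs j))%:E.

Definition law_of (dZ : measure_display) (Zt : measurableType dZ)
  (PZ : probability Zt R) (p : nat) (f : Zt -> 'rV[R]_p)
  : set 'rV[R]_p -> \bar R :=
  fun A => PZ (f @^-1` A).

Definition outer_le (dO : measure_display) (Omega : measurableType dO)
  (P : probability Omega R) (E : set Omega) (eps : R) :=
  exists A : set Omega, measurable A /\ E `<=` A /\ (P A <= eps%:E)%E.

(* X_k = O_p(r_k) as k -> oo (outer-probability version, nonnegative X). *)
Definition bigOp1 (dO : measure_display) (Omega : measurableType dO)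
  (P : probability Omega R) (X : nat -> Omega -> \bar R) (r : nat -> R) :=
  forall eps : R, 0 < eps -> exists M : R, exists N : nat,
    forall k, (N <= k)%N -> outer_le P [set w | ((M * r k)%:E < X k w)%E] eps.

Definition bigOp2 (dO : measure_display) (Omega : measurableType dO)
  (P : probability Omega R) (Y : nat -> nat -> Omega -> R)
  (r : nat -> nat -> R) :=
  forall eps : R, 0 < eps -> exists M : R, exists N : nat,
    forall m n, (N <= m)%N -> (N <= n)%N ->
      outer_le P [set w | M * r m n < Y m n w] eps.

Definition mutually_independent (dO : measure_display) (Omega : measurableType dO)
  (P : probability Omega R) (I : eqType) (dZ : measure_display)
  (Zt : measurableType dZ) (X : I -> Omega -> Zt) :=
  forall s : seq I, uniq s -> forall A : I -> set Zt, (forall i, measurable (A i)) ->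
    P (\bigcap_(i in [set` s]) (X i @^-1` A i)) =
    (\big[*%E/1%E]_(i <- s) P (X i @^-1` A i))%E.

Definition has_law (dO : measure_display) (Omega : measurableType dO)
  (P : probability Omega R) (I : Type) (dZ : measure_display)
  (Zt : measurableType dZ) (PZ : probability Zt R) (X : I -> Omega -> Zt) :=
  forall i, measurable_fun setT (X i) /\
    forall A, measurable A -> P (X i @^-1` A) = PZ A.

Definition iid_seq (dO : measure_display) (Omega : measurableType dO)
  (P : probability Omega R) (dZ : measure_display)
  (Zt : measurableType dZ) (PZ : probability Zt R) (Y : nat -> Omega -> Zt) :=
  has_law P PZ Y /\ mutually_independent P Y.

Definition inv_sqrt (k : nat) : R := (Num.sqrt (k%:R))^-1.

End SlicedWasserstein.

(** By the triangle inequality and the minimality of theta_hat,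
      d_SW(P_theta_hat, P_theta* ) <= 2 sup_theta d_SW(Q^theta_m, P_theta)
                                       + 2 d_SW(P_n, P_theta* ),
    and (ii), applied once to Z_1, Z_2, ... and once to Z*_1, Z*_2, ..., makes
    the two terms O_p(m^-1/2) and O_p(n^-1/2).  Assumption (i) transfers the
    bound to the parameters; a union bound combines the two events. *)

From HB Require Import structures.
From mathcomp Require Import all_boot all_order all_algebra.
From mathcomp Require Import all_classical all_reals all_analysis.
From mathcomp Require Import measurable_realfun lra.

Set Implicit Arguments.
Unset Strict Implicit.
Unset Printing Implicit Defensive.

Import Order.TTheory GRing.Theory Num.Theory.
Import numFieldNormedType.Exports.
Local Open Scope classical_set_scope.
Local Open Scope ring_scope.

Section SlicedWassersteinPseudometric.
Variables (R : realType) (p : nat).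

Lemma continuous_Borel_measurable (f : 'rV[R]_p -> R) : continuous f ->
  measurable_fun setT (f : BorelRp R p -> R).
Proof.
move=> /continuousP f_cont.
apply: (measurability _ (RGenOpens.measurableE R)).
move=> _ [_ [a [b ->] <-]]; rewrite setTI.
by apply: sub_sigma_algebra; apply: f_cont; exact: interval_open.
Qed.

Lemma measurable_dotp d (T : measurableType d) (f g : T -> BorelRp R p) :
  measurable_fun setT f -> measurable_fun setT g ->
  measurable_fun setT (fun x => dotp (f x : 'rV_p) (g x : 'rV_p)).
Proof.
have coord_measurable i : measurable_fun setT (fun w : BorelRp R p => w ord0 i).
  by apply: continuous_Borel_measurable; exact: coord_continuous.
move=> mf mg; apply: measurable_sum => i; apply: measurable_funM.
- exact: measurableT_comp (coord_measurable i) mf.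
- exact: measurableT_comp (coord_measurable i) mg.
Qed.

Lemma measurable_sphere : measurable (@sphere R p : set (BorelRp R p)).
Proof.
have m_enorm : measurable_fun setT (fun w : BorelRp R p => enorm (w : 'rV_p)).
  apply: measurableT_comp (continuous_measurable_fun (@sqrt_continuous R)) _.
  exact: measurable_dotp.
by have := m_enorm measurableT _ (measurable_set1 (1 : R)); rewrite setTI.
Qed.

Lemma measurable_halfspace (w : 'rV[R]_p) (t : R) :
  measurable ([set x | dotp w x <= t] : set (BorelRp R p)).
Proof.
have m_dotw : measurable_fun setT (fun x : BorelRp R p => dotp w (x : 'rV_p)).
  exact: measurable_dotp (measurable_cst _) _.
have := m_dotw measurableT _ (measurable_itv `]-oo, t]).
by rewrite setTI; congr measurable; apply/seteqP; split=> x /=; rewrite in_itv.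
Qed.

(* Joint measurability in (w, t) is what makes w |-> W_1(mu_w, nu_w)
   measurable (by Tonelli), hence the outer integral in d_SW additive. *)
Definition measurable_proj_cdf (mu : set 'rV[R]_p -> \bar R) :=
  exists F : (BorelRp R p * R)%type -> R, measurable_fun setT F /\
    forall w t, mu [set x | dotp w x <= t] = (F (w, t))%:E.

Lemma W1_projE {mu nu : set 'rV[R]_p -> \bar R} {F G : (BorelRp R p * R)%type -> R} :
  (forall w t, mu [set x | dotp w x <= t] = (F (w, t))%:E) ->
  (forall w t, nu [set x | dotp w x <= t] = (G (w, t))%:E) ->
  forall w, W1_proj mu nu w =
    (\int[@lebesgue_measure R]_(t in [set: R]) (`|F (w, t) - G (w, t)|)%:E)%E.
Proof.
move=> muF nuG w; apply: eq_integral => t _.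
by rewrite muF nuG -EFinB abse_EFin.
Qed.

Lemma measurable_EFin_normB d (T : measurableType d) (F G : T -> R) :
  measurable_fun setT F -> measurable_fun setT G ->
  measurable_fun setT (fun q => (`|F q - G q|)%:E).
Proof.
move=> mF mG; apply/measurable_EFinP.
exact: measurableT_comp (@normr_measurable R setT) (measurable_funB mF mG).
Qed.

Lemma W1_proj_ge0 (mu nu : set 'rV[R]_p -> \bar R) w : (0 <= W1_proj mu nu w)%E.
Proof. by apply: integral_ge0 => t _; exact: abse_ge0. Qed.

Lemma measurable_W1_proj (mu nu : set 'rV[R]_p -> \bar R) :
  measurable_proj_cdf mu -> measurable_proj_cdf nu ->
  measurable_fun setT (fun w : BorelRp R p => W1_proj mu nu w).
Proof.
move=> [F [mF muF]] [G [mG nuG]].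
rewrite (_ : (fun w => _) =
    fubini_F (@lebesgue_measure R) (fun q => (`|F q - G q|)%:E)); last first.
  by apply/funext => w; rewrite (W1_projE muF nuG).
apply: measurable_fun_fubini_tonelli_F; first exact: measurable_EFin_normB.
by move=> q; rewrite lee_fin.
Qed.

Lemma W1_proj_sym (mu nu : set 'rV[R]_p -> \bar R) :
  measurable_proj_cdf mu -> measurable_proj_cdf nu ->
  forall w, W1_proj mu nu w = W1_proj nu mu w.
Proof.
move=> [F [_ muF]] [G [_ nuG]] w.
rewrite (W1_projE muF nuG) (W1_projE nuG muF).
by apply: eq_integral => t _; rewrite distrC.
Qed.

Lemma W1_proj_triangle (mu nu rho : set 'rV[R]_p -> \bar R) :
  measurable_proj_cdf mu -> measurable_proj_cdf nu -> measurable_proj_cdf rho ->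
  forall w, (W1_proj mu rho w <= W1_proj mu nu w + W1_proj nu rho w)%E.
Proof.
move=> [F [mF muF]] [G [mG nuG]] [H [mH rhoH]] w.
rewrite (W1_projE muF rhoH) (W1_projE muF nuG) (W1_projE nuG rhoH).
have m_section (A B : (BorelRp R p * R)%type -> R) :
    measurable_fun setT A -> measurable_fun setT B ->
    measurable_fun setT (fun t : R => (`|A (w, t) - B (w, t)|)%:E).
  move=> mA mB.
  exact: measurableT_comp (measurable_EFin_normB mA mB)
    (@pair1_measurable _ _ (BorelRp R p) R w).
rewrite -ge0_integralD //; [|exact: m_section..].
apply: ge0_le_integral => //; [exact: m_section| |].
- exact: emeasurable_funD (m_section _ _ mF mG) (m_section _ _ mG mH).
- by move=> t _; rewrite -EFinD lee_fin; exact: ler_distD.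
Qed.

Lemma measurable_set_ler d (T : measurableType d) (f g : T -> R) :
  measurable_fun setT f -> measurable_fun setT g -> measurable [set x | f x <= g x].
Proof.
move=> mf mg; have := measurable_fun_ler mf mg measurableT; move=> /(_ [set true] I).
by rewrite setTI; congr measurable; apply/seteqP; split=> x /=.
Qed.

Lemma measurable_proj_cdf_empirical (xs : nat -> 'rV[R]_p) (k : nat) :
  measurable_proj_cdf (empirical xs k).
Proof.
pose S j := [set q : (BorelRp R p * R)%type | dotp (q.1 : 'rV_p) (xs j) <= q.2].
have mS j : measurable (S j).
  apply: measurable_set_ler measurable_snd.
  exact: measurable_dotp measurable_fst (measurable_cst _).
exists (fun q => k%:R^-1 * \sum_(j < k) \1_(S j) q); split=> //.
apply: measurable_funM; first exact: measurable_cst.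
by apply: measurable_sum => j; exact: measurable_indic.
Qed.

Lemma measurable_proj_cdf_law_of dZ (Zt : measurableType dZ) (PZ : probability Zt R)
    (f : Zt -> 'rV[R]_p) :
  measurable_fun setT (f : Zt -> BorelRp R p) -> measurable_proj_cdf (law_of PZ f).
Proof.
move=> mf.
pose E := [set qz : ((BorelRp R p * R) * Zt)%type |
  dotp (qz.1.1 : 'rV_p) (f qz.2) <= qz.1.2].
have mE : measurable E.
  apply: measurable_set_ler; last exact: measurableT_comp measurable_snd measurable_fst.
  apply: measurable_dotp; first exact: measurableT_comp measurable_fst measurable_fst.
  exact: measurableT_comp mf measurable_snd.
exists (fun q => fine (PZ (xsection E q))); split.
  apply: measurableT_comp; first exact: fine_measurable.
  exact: measurable_fun_xsection.
move=> w t; have -> : xsection E (w, t) = f @^-1` [set x | dotp w x <= t].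
  by apply/seteqP; split=> z /=; rewrite /xsection /= inE.
rewrite fineK //; apply: fin_num_measure.
by have := mf measurableT _ (measurable_halfspace w t); rewrite setTI.
Qed.

Variable sigma : probability (BorelRp R p) R.

Lemma dSW_ge0 (mu nu : set 'rV[R]_p -> \bar R) : (0 <= dSW sigma mu nu)%E.
Proof. by apply: integral_ge0 => w _; exact: W1_proj_ge0. Qed.

Lemma dSW_sym (mu nu : set 'rV[R]_p -> \bar R) :
  measurable_proj_cdf mu -> measurable_proj_cdf nu ->
  dSW sigma mu nu = dSW sigma nu mu.
Proof. by move=> cmu cnu; apply: eq_integral => w _; exact: W1_proj_sym. Qed.

Lemma dSW_triangle (mu nu rho : set 'rV[R]_p -> \bar R) :
  measurable_proj_cdf mu -> measurable_proj_cdf nu -> measurable_proj_cdf rho ->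
  (dSW sigma mu rho <= dSW sigma mu nu + dSW sigma nu rho)%E.
Proof.
move=> cmu cnu crho.
have m_W1 a b : measurable_proj_cdf a -> measurable_proj_cdf b ->
    measurable_fun (@sphere R p : set (BorelRp R p)) (W1_proj a b).
  by move=> ca cb; exact: measurable_funS (measurable_W1_proj ca cb).
rewrite /dSW -(ge0_integralD _ measurable_sphere (fun w _ => W1_proj_ge0 _ _ w)
  (m_W1 _ _ cmu cnu) (fun w _ => W1_proj_ge0 _ _ w) (m_W1 _ _ cnu crho)).
apply: ge0_le_integral.
- exact: measurable_sphere.
- by move=> w _; exact: W1_proj_ge0.
- exact: m_W1 _ _ cmu crho.
- exact: emeasurable_funD (m_W1 _ _ cmu cnu) (m_W1 _ _ cnu crho).
- by move=> w _; exact: W1_proj_triangle.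
Qed.

(* Read a = P_theta_hat, b = P_theta*, Q = Q^theta_hat_m, Qs = Q^theta*_m. *)
Lemma dSW_minimizer_le (a b Q Qs Pn : set 'rV[R]_p -> \bar R) :
  measurable_proj_cdf a -> measurable_proj_cdf b -> measurable_proj_cdf Q ->
  measurable_proj_cdf Qs -> measurable_proj_cdf Pn ->
  (dSW sigma Q Pn <= dSW sigma Qs Pn)%E ->
  (dSW sigma a b <=
     dSW sigma Q a + (dSW sigma Qs b + dSW sigma Pn b + dSW sigma Pn b))%E.
Proof.
move=> ca cb cQ cQs cPn Q_min.
apply: le_trans (dSW_triangle ca cQ cb) _.
rewrite (dSW_sym ca cQ); apply: leeD; first exact: lexx.
apply: le_trans (dSW_triangle cQ cPn cb) _; apply: leeD; last exact: lexx.
apply: le_trans Q_min _; apply: le_trans (dSW_triangle cQs cb cPn) _.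
by rewrite (dSW_sym cb cPn).
Qed.

End SlicedWassersteinPseudometric.

Section Probability.
Variables (R : realType) (dO : measure_display) (Omega : measurableType dO).
Variable P : probability Omega R.

Lemma mutually_independent_comp (I J : eqType) dZ (Zt : measurableType dZ)
    (X : I -> Omega -> Zt) (f : J -> I) :
  injective f -> mutually_independent P X -> mutually_independent P (X \o f).
Proof.
move=> f_inj indepX s s_uniq A mA.
(* By injectivity, B is A on the image of f and setT off it. *)
pose B i := [set z | forall j, f j = i -> A j z].
have BfE j : B (f j) = A j.
  apply/seteqP; split=> z /=; first exact.
  by move=> Az k /f_inj ->.
have mB i : measurable (B i).
  have [[j <-]|no_preimage] := pselect (exists j, f j = i); first by rewrite BfE.
  rewrite (_ : B i = setT) //; apply/seteqP; split=> z // _ j fji.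
  by case: no_preimage; exists j.
have -> : \big[*%E/1%E]_(j <- s) P ((X \o f) j @^-1` A j) =
          \big[*%E/1%E]_(i <- map f s) P (X i @^-1` B i).
  by rewrite big_map; apply: eq_bigr => j _; rewrite BfE.
rewrite -indepX ?map_inj_uniq //; congr (P _); apply/seteqP; split=> w /= Xw.
- by move=> _ /mapP[j sj ->]; rewrite BfE; exact: Xw.
- by move=> j sj; rewrite -BfE; apply: Xw; exact: map_f.
Qed.

Lemma outer_le_subset (E F : set Omega) (eps : R) :
  E `<=` F -> outer_le P F eps -> outer_le P E eps.
Proof.
move=> EF [A [mA [FA PA]]]; exists A; split=> //.
by split=> //; exact: subset_trans FA.
Qed.

Lemma outer_leU (E F : set Omega) (e1 e2 : R) :
  outer_le P E e1 -> outer_le P F e2 -> outer_le P (E `|` F) (e1 + e2).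
Proof.
move=> [A [mA [EA PA]]] [B [mB [FB PB]]].
exists (A `|` B); split; first exact: measurableU.
split; first exact: setUSS.
by apply: le_trans (measureU2 _ mA mB) _; rewrite EFinD leeD.
Qed.

End Probability.

Section MinimumDistanceEstimator.
Variables (R : realType) (d p : nat) (dZ : measure_display) (Zt : measurableType dZ).
Variables (PZ : probability Zt R) (Theta : set 'rV[R]_d).
Variables (tau : 'rV[R]_d -> Zt -> 'rV[R]_p) (sigma : probability (BorelRp R p) R).
Hypothesis tau_measurable :
  forall th, Theta th -> measurable_fun setT (tau th : Zt -> BorelRp R p).

Lemma minimum_distance_error_le (C eta_m eta_n : R) (zs zstar : nat -> Zt)
    (m n : nat) (th_hat th_star : 'rV[R]_d) :
  0 <= C -> Theta th_hat -> Theta th_star ->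
  ((enorm (th_hat - th_star))%:E <=
     C%:E * dSW sigma (law_of PZ (tau th_hat)) (law_of PZ (tau th_star)))%E ->
  (dSW sigma (empirical (fun j => tau th_hat (zs j)) m)
             (empirical (fun i => tau th_star (zstar i)) n)
   <= dSW sigma (empirical (fun j => tau th_star (zs j)) m)
                (empirical (fun i => tau th_star (zstar i)) n))%E ->
  (forall th, Theta th ->
     dSW sigma (empirical (fun j => tau th (zs j)) m) (law_of PZ (tau th))
     <= eta_m%:E)%E ->
  (dSW sigma (empirical (fun i => tau th_star (zstar i)) n)
             (law_of PZ (tau th_star)) <= eta_n%:E)%E ->
  enorm (th_hat - th_star) <= C * (2 * (eta_m + eta_n)).
Proof.
move=> C_ge0 Th_hat Th_star identif minimal fit_m fit_n.
have law_cdf th : Theta th -> measurable_proj_cdf (law_of PZ (tau th)).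
  by move=> Th; exact: measurable_proj_cdf_law_of (tau_measurable Th).
have dSW_law_le : (dSW sigma (law_of PZ (tau th_hat)) (law_of PZ (tau th_star))
                   <= (2 * (eta_m + eta_n))%:E)%E.
  apply: le_trans (dSW_minimizer_le (law_cdf _ Th_hat) (law_cdf _ Th_star)
    (measurable_proj_cdf_empirical _ _) (measurable_proj_cdf_empirical _ _)
    (measurable_proj_cdf_empirical _ _) minimal) _.
  rewrite (_ : 2 * _ = eta_m + (eta_m + eta_n + eta_n)); last by lra.
  rewrite !EFinD; apply: leeD (fit_m _ Th_hat) _.
  exact: leeD (leeD (fit_m _ Th_star) fit_n) fit_n.
rewrite -lee_fin EFinM; apply: le_trans identif _.
exact: lee_pmul (lee_tofin C_ge0) (dSW_ge0 _ _ _) (lexx _) dSW_law_le.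
Qed.

End MinimumDistanceEstimator.

Lemma inv_sqrt_ge0 (R : realType) (k : nat) : 0 <= inv_sqrt R k.
Proof. by rewrite invr_ge0 sqrtr_ge0. Qed.
Theorem theorem2 (R : realType) (d p : nat)
  (dZ : measure_display) (Zt : measurableType dZ) (PZ : probability Zt R)
  (Theta : set 'rV[R]_d) (tau : 'rV[R]_d -> Zt -> 'rV[R]_p)
  (sigma : probability (BorelRp R p) R)
  (dO : measure_display) (Omega : measurableType dO) (P : probability Omega R)
  (Zs Zstar : nat -> Omega -> Zt) (theta_star : 'rV[R]_d)
  (theta_hat : nat -> nat -> Omega -> 'rV[R]_d) :
  (* sigma is the uniform probability measure on S^{p-1} *)
  uniform_on_sphere sigma ->
  (* the simulator is measurable and each P_theta has finite first moment *)
  (forall th, Theta th -> measurable_fun setT (tau th : Zt -> BorelRp R p)) ->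
  (forall th, Theta th -> PZ.-integrable setT (fun z => (enorm (tau th z))%:E)) ->
  Theta theta_star ->
  (* Z_1, Z_2, ... and Z*_1, Z*_2, ... are all independent with law P_Z *)
  has_law P PZ Zs -> has_law P PZ Zstar ->
  mutually_independent P
    (fun i : nat + nat => match i with inl j => Zs j | inr j => Zstar j end) ->
  (* assumption (i) *)
  (exists C : R, 0 < C /\ forall th1 th2, Theta th1 -> Theta th2 ->
     ((enorm (th1 - th2))%:E <=
        C%:E * dSW sigma (law_of PZ (tau th1)) (law_of PZ (tau th2)))%E) ->
  (* assumption (ii) *)
  (forall Y : nat -> Omega -> Zt, iid_seq P PZ Y ->
     bigOp1 P
       (fun k w => ereal_sup
          [set dSW sigma (empirical (fun j => tau th (Y j w)) k) (law_of PZ (tau th))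
          | th in Theta])
       (@inv_sqrt R)) ->
  (* theta_hat m n is a minimizer of theta |-> d_SW(Q^theta_m, P_n) over Theta *)
  (forall m n w, (0 < m)%N -> (0 < n)%N ->
     Theta (theta_hat m n w) /\
     forall th, Theta th ->
       (dSW sigma (empirical (fun j => tau (theta_hat m n w) (Zs j w)) m)
                  (empirical (fun i => tau theta_star (Zstar i w)) n)
        <= dSW sigma (empirical (fun j => tau th (Zs j w)) m)
                     (empirical (fun i => tau theta_star (Zstar i w)) n))%E) ->
  (* conclusion: ||theta_hat_{m,n} - theta*|| = O_p(n^{-1/2} + m^{-1/2}) *)
  bigOp2 P (fun m n w => enorm (theta_hat m n w - theta_star))
    (fun m n => inv_sqrt R n + inv_sqrt R m).

Proof.
move=> _ tau_measurable _ Theta_star lawZs lawZstar indep [C [C_gt0 identif]] rate.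
move=> minimizer eps eps_gt0.
have iidZs : iid_seq P PZ Zs := conj lawZs (mutually_independent_comp inl_inj indep).
have iidZstar : iid_seq P PZ Zstar :=
  conj lawZstar (mutually_independent_comp inr_inj indep).
have eps2_gt0 : 0 < eps / 2 by rewrite divr_gt0.
have [M1 [N1 rate_m]] := rate Zs iidZs _ eps2_gt0.
have [M2 [N2 rate_n]] := rate Zstar iidZstar _ eps2_gt0.
pose M := Num.max (Num.max M1 M2) 0.
exists (C * (2 * M)), (maxn (maxn N1 N2) 1) => m n.
rewrite !geq_max => /andP[/andP[N1m _] m_gt0] /andP[/andP[_ N2n] n_gt0].
rewrite [eps]splitr; apply: outer_le_subset (outer_leU (rate_m m N1m) (rate_n n N2n)).
move=> w; apply: contraPP => /not_orP[/negP sup_m_le /negP sup_n_le].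
rewrite ltNge negbK in sup_m_le; rewrite ltNge negbK in sup_n_le.
apply/negP; rewrite ltNge negbK.
have [Th_hat minimal] := minimizer m n w m_gt0 n_gt0.
apply: le_trans (minimum_distance_error_le tau_measurable (ltW C_gt0) Th_hat
  Theta_star (identif _ _ Th_hat Theta_star) (minimal _ Theta_star) _ _) _.
- by move=> th Th; apply: le_trans sup_m_le; apply: ereal_sup_ubound; exists th.
- by apply: le_trans sup_n_le; apply: ereal_sup_ubound; exists theta_star.
have M1_le : M1 * inv_sqrt R m <= M * inv_sqrt R m.
  by apply: (ler_wpM2r (inv_sqrt_ge0 R m)); rewrite !le_max lexx.
have M2_le : M2 * inv_sqrt R n <= M * inv_sqrt R n.
  by apply: (ler_wpM2r (inv_sqrt_ge0 R n)); rewrite !le_max lexx orbT.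
rewrite -mulrA ler_pM2l //; lra.
Qed.
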